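(* Let $G$ be a nilpotent $p$-group ($p$ prime) and let $G_0$ be the set of elements of $G$ of infinite height. Then $G_0$ is a normal subgroup of $G$, and the quotient group $G/G_0$ has no nontrivial elements of infinite height.
   Context: For a nilpotent $p$-group $G$, the height of $g\in G$ is the greatest integer $n\ge 0$ such that $g=h^{p^n}$ for some $h\in G$; if there is no greatest such $n$, $g$ is said to have infinite height. *)

From mathcomp Require Import all_boot.
Set Implicit Arguments.
Unset Strict Implicit.
Unset Printing Implicit Defensive.

Record group := Group {
  carrier :> Type;
  gmul : carrier -> carrier -> carrier;
  gone : carrier;
  ginv : carrier -> carrier;
  gmulA : forall x y z, gmul x (gmul y z) = gmul (gmul x y) z;
  gmul1 : forall x, gmul gone x = x;
  gmulV : forall x, gmul (ginv x) x = gone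
}.

Section Defs.
Variable G : group.

Fixpoint gpow (x : G) (n : nat) : G :=
  match n with 0 => gone G | S k => gmul x (gpow x k) end.

Definition gcomm (x y : G) : G :=
  gmul (ginv x) (gmul (ginv y) (gmul x y)).

Definition is_subgroup (S : G -> Prop) : Prop :=
  S (gone G) /\ (forall x y, S x -> S y -> S (gmul x y)) /\
  (forall x, S x -> S (ginv x)).

Definition is_normal_subgroup (S : G -> Prop) : Prop :=
  is_subgroup S /\ forall x g, S x -> S (gmul (ginv g) (gmul x g)).

Fixpoint upper_central (i : nat) : G -> Prop :=
  match i with
  | 0 => fun x => x = gone G
  | S k => fun x => forall y, upper_central k (gcomm x y)
  end.

Definition nilpotent : Prop := exists c, forall x, upper_central c x.

Definition p_group (p : nat) : Prop := forall x : G, exists n, gpow x (p ^ n) = gone G.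

Definition has_height (p : nat) (g : G) (n : nat) : Prop :=
  (exists h, g = gpow h (p ^ n)) /\
  (forall m, (exists h, g = gpow h (p ^ m)) -> m <= n).

Definition infinite_height (p : nat) (g : G) : Prop :=
  ~ exists n, has_height p g n.

(* Heights in the quotient G/N (N normal), written out on cosets:
   (hN)^(p^n) = gN  iff  g^-1 h^(p^n) \in N. *)
Definition has_height_mod (N : G -> Prop) (p : nat) (g : G) (n : nat) : Prop :=
  (exists h, N (gmul (ginv g) (gpow h (p ^ n)))) /\
  (forall m, (exists h, N (gmul (ginv g) (gpow h (p ^ m)))) -> m <= n).

Definition infinite_height_mod (N : G -> Prop) (p : nat) (g : G) : Prop :=
  ~ exists n, has_height_mod N p g n.

End Defs.

(** Let [c] be the nilpotency class.  If [h ^+ m = 1], then commuting with [h]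
    pushes [t ^+ m] one step further down the upper central series than [t],
    so [h] commutes with every [m ^ c]-th power.  Given [x = h ^+ p ^ n] with
    [h ^+ p ^ a = 1] and [y] of infinite height, write [y = k ^+ p ^ (a c + n)];
    then [h] commutes with [k' = k ^+ p ^ (a c)] and [x y = (h k') ^+ p ^ n].
    Hence the elements of infinite height, i.e. those with a [p ^ n]-th root for
    every [n], form a subgroup, normal since conjugation preserves roots.
    Finally, if [g G0] has infinite height in [G / G0], then for each [n]
    we have [g = h ^+ p ^ n z] with [z] in [G0], and by the same computation
    [h ^+ p ^ n z] is a [p ^ n]-th power. *)

From mathcomp Require Import all_boot.
From Stdlib Require Import Classical.

Set Implicit Arguments.
Unset Strict Implicit.
Unset Printing Implicit Defensive.

Section GroupTheory.
Variable G : group.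
Implicit Types x y z g h k t : G.
Local Notation "x • y" := (@gmul G x y) (at level 40, left associativity).
Local Notation e := (gone G).
Local Notation "x ^-1" := (@ginv G x).
Local Notation "x ^+ n" := (@gpow G x n).

Lemma mul1g x : e • x = x. Proof. exact: gmul1. Qed.
Lemma mulVg x : x^-1 • x = e. Proof. exact: gmulV. Qed.
Lemma mulgA x y z : x • (y • z) = x • y • z. Proof. exact: gmulA. Qed.

Lemma mulgV x : x • x^-1 = e.
Proof. by rewrite -[x • _]mul1g -(mulVg x^-1) -mulgA (mulgA x^-1) mulVg mul1g. Qed.

Lemma mulg1 x : x • e = x.
Proof. by rewrite -(mulVg x) mulgA mulgV mul1g. Qed.

Lemma mulKg x y : x^-1 • (x • y) = y.
Proof. by rewrite mulgA mulVg mul1g. Qed.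

Lemma mulKVg x y : x • (x^-1 • y) = y.
Proof. by rewrite mulgA mulgV mul1g. Qed.

Lemma mulg_eq1 x y : x • y = e -> x = y^-1.
Proof. by move=> xy1; rewrite -[x]mulg1 -(mulgV y) mulgA xy1 mul1g. Qed.

Lemma invgK x : (x^-1)^-1 = x.
Proof. by apply/esym/mulg_eq1; rewrite mulgV. Qed.

Lemma invMg x y : (x • y)^-1 = y^-1 • x^-1.
Proof. by apply/esym/mulg_eq1; rewrite -mulgA (mulgA x^-1) mulVg mul1g mulVg. Qed.

Lemma invg1 : e^-1 = e.
Proof. by apply/esym/mulg_eq1; rewrite mulg1. Qed.

Ltac gsimpl := repeat (rewrite ?mul1g ?mulg1 ?mulVg ?mulgV ?mulKg ?mulKVg
                         ?invMg ?invgK ?invg1; rewrite -?mulgA).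

Lemma expgD x a b : x ^+ (a + b) = x ^+ a • x ^+ b.
Proof. by elim: a => [|a IHa] /=; rewrite ?mul1g ?IHa ?mulgA. Qed.

Lemma expgSr x a : x ^+ a.+1 = x ^+ a • x.
Proof. by rewrite -addn1 expgD /= mulg1. Qed.

Lemma expgM x a b : x ^+ (a * b) = (x ^+ a) ^+ b.
Proof. by elim: b => [|b IHb]; rewrite ?muln0 // mulnS expgD IHb. Qed.

Lemma expg1n n : e ^+ n = e.
Proof. by elim: n => [|n IHn] //=; rewrite IHn mul1g. Qed.

Lemma expVgn x n : (x ^+ n)^-1 = x^-1 ^+ n.
Proof. by elim: n => [|n IHn] /=; rewrite ?invg1 // invMg IHn -expgSr. Qed.

Lemma conjXg g x n : g^-1 • (x ^+ n • g) = (g^-1 • (x • g)) ^+ n.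
Proof. by elim: n => [|n IHn] /=; rewrite -?IHn; gsimpl. Qed.

Lemma commuteX x y n : x • y = y • x -> x ^+ n • y = y • x ^+ n.
Proof.
move=> cxy; elim: n => [|n IHn] /=; first by gsimpl.
by rewrite -mulgA IHn !mulgA cxy.
Qed.

Lemma expgMn x y n : x • y = y • x -> (x • y) ^+ n = x ^+ n • y ^+ n.
Proof.
move=> cxy; elim: n => [|n IHn] /=; first by gsimpl.
by rewrite IHn -!mulgA (mulgA y) -(commuteX n cxy); gsimpl.
Qed.

Section EqMod.
Variable N : G -> Prop.
Hypothesis nN : is_normal_subgroup N.

Definition eq_mod x y := N (x^-1 • y).
Local Notation "x ≡ y" := (eq_mod x y) (at level 70).

Definition central_mod z := forall g, N (gcomm z g).

Lemma groupN1 : N e. Proof. by case: nN => [[]]. Qed.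
Lemma groupNM x y : N x -> N y -> N (x • y). Proof. by case: nN => [[_ [NM _]] _]; apply: NM. Qed.
Lemma groupNV x : N x -> N x^-1. Proof. by case: nN => [[_ [_ NV]] _]; apply: NV. Qed.
Lemma groupNJ x g : N x -> N (g^-1 • (x • g)). Proof. by case: nN => _; apply. Qed.

Lemma eq_mod_refl x : x ≡ x. Proof. by rewrite /eq_mod mulVg; apply: groupN1. Qed.

Lemma eq_mod_sym x y : x ≡ y -> y ≡ x.
Proof. by move/groupNV; rewrite invMg invgK. Qed.

Lemma eq_mod_trans y x z : x ≡ y -> y ≡ z -> x ≡ z.
Proof. by move=> xy yz; have := groupNM xy yz; rewrite -mulgA mulKVg. Qed.

Lemma eq_modM x x' y y' : x ≡ x' -> y ≡ y' -> x • y ≡ x' • y'.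
Proof. by move=> xx' yy'; have := groupNM (groupNJ y xx') yy'; rewrite /eq_mod; gsimpl. Qed.

Lemma eq_mod1 x : x ≡ e -> N x.
Proof. by rewrite /eq_mod mulg1 => /groupNV; rewrite invgK. Qed.

Lemma central_mod_conj z g : central_mod z -> g^-1 • (z • g) ≡ z.
Proof. by move=> /(_ g); apply: eq_mod_sym. Qed.

Lemma central_mod_commute z g : central_mod z -> z • g ≡ g • z.
Proof. by move=> /(_ g) /groupNV; rewrite /eq_mod /gcomm; gsimpl. Qed.

Lemma expgM_central_mod x z a : central_mod z -> (x • z) ^+ a ≡ x ^+ a • z ^+ a.
Proof.
move=> zN; elim: a => [|a IHa] /=; first by rewrite mulg1; apply: eq_mod_refl.
apply: eq_mod_trans (eq_modM (eq_mod_refl (x • z)) IHa) _.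
rewrite -!mulgA; apply: eq_modM (eq_mod_refl x) _.
by rewrite !mulgA; apply: eq_modM (central_mod_commute _ zN) (eq_mod_refl _).
Qed.

Lemma conj_expg_central_mod h t a : central_mod (gcomm h t) ->
  (t ^+ a)^-1 • (h • t ^+ a) ≡ h • gcomm h t ^+ a.
Proof.
move=> zN; elim: a => [|a IHa] /=; first by gsimpl; apply: eq_mod_refl.
have -> : (t • t ^+ a)^-1 • (h • (t • t ^+ a))
        = (t ^+ a)^-1 • (h • t ^+ a) • ((t ^+ a)^-1 • (gcomm h t • t ^+ a)).
  by rewrite /gcomm; gsimpl.
by rewrite -/(gpow _ a.+1) expgSr (mulgA h); apply: eq_modM IHa (central_mod_conj _ zN).
Qed.

(* Since [h • gcomm h t] is the conjugate [t^-1 h t], its [m]-th power is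
   trivial; hence so is [gcomm h t ^+ m] modulo [N], and this is [gcomm h (t ^+ m)]. *)
Lemma comm_expg_central_mod h t m : h ^+ m = e -> central_mod (gcomm h t) ->
  N (gcomm h (t ^+ m)).
Proof.
move=> hm1 zN; set z := gcomm h t.
have conj_h : t^-1 • (h • t) = h • z by rewrite /z /gcomm; gsimpl.
have zm1 : z ^+ m ≡ e.
  apply: eq_mod_sym; have := expgM_central_mod h m zN.
  by rewrite -conj_h -conjXg hm1 !mul1g mulVg.
apply: eq_mod1; rewrite /gcomm.
apply: eq_mod_trans (eq_modM (eq_mod_refl h^-1) (conj_expg_central_mod m zN)) _.
by rewrite mulKg.
Qed.

End EqMod.

Lemma upper_central_normal j : is_normal_subgroup (@upper_central G j).
Proof.
elim: j => [|j IHj] /=.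
  do !split; [by move=> x y -> ->; gsimpl | by move=> x ->; gsimpl | by move=> x g ->; gsimpl].
do !split.
- by move=> y; rewrite /gcomm; gsimpl; apply: groupN1.
- move=> x x' zx zx' y.
  have -> : gcomm (x • x') y = x'^-1 • (gcomm x y • x') • gcomm x' y.
    by rewrite /gcomm; gsimpl.
  by apply: groupNM => //; apply: groupNJ.
- move=> x zx y.
  have -> : gcomm x^-1 y = (x^-1)^-1 • ((gcomm x y)^-1 • x^-1).
    by rewrite /gcomm; gsimpl.
  by apply: groupNJ => //; apply: groupNV.
- move=> x g zx y.
  have -> : gcomm (g^-1 • (x • g)) y = g^-1 • (gcomm x (g • y • g^-1) • g).
    by rewrite /gcomm; gsimpl.
  exact: groupNJ.
Qed.

Lemma commute_expg_class c h k m : (forall x, upper_central c x) -> h ^+ m = e ->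
  h • k ^+ (m ^ c) = k ^+ (m ^ c) • h.
Proof.
move=> nilG hm1.
have zc i : i <= c -> upper_central (c - i) (gcomm h (k ^+ (m ^ i))).
  elim: i => [|i IHi] ltic; first by rewrite subn0.
  move: (IHi (ltnW ltic)); rewrite -(subnSK ltic) /= => zk.
  by rewrite expnSr expgM; apply: comm_expg_central_mod => //; apply: upper_central_normal.
move: (zc c (leqnn c)); rewrite subnn /= /gcomm => /(congr1 (gmul (k ^+ (m ^ c) • h))).
by rewrite mulg1; gsimpl.
Qed.

Section Heights.
Variable p : nat.

Definition powers_in (R : G -> Prop) m := exists h, R (h ^+ (p ^ m)).

Lemma powers_in_le R m m' : m' <= m -> powers_in R m -> powers_in R m'.
Proof. by move=> le_m'm [h Rh]; exists (h ^+ (p ^ (m - m'))); rewrite -expgM -expnD subnK. Qed.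

(* A downward closed set of exponents with no largest element is all of [nat]. *)
Lemma powers_in_unbounded R : (exists x, R x) ->
  ~ (exists n, powers_in R n /\ forall m, powers_in R m -> m <= n) ->
  forall n, powers_in R n.
Proof.
move=> [x Rx] noMax; elim=> [|n IHn]; first by exists x; rewrite expn0 /= mulg1.
apply: NNPP => notRn1; apply: noMax; exists n; split=> // m Rm.
by rewrite leqNgt; apply/negP => lt_nm; apply: notRn1 (powers_in_le lt_nm Rm).
Qed.

Lemma infinite_heightP y : infinite_height p y <-> forall n, exists h, y = h ^+ (p ^ n).
Proof.
split=> [yinf | roots_y [n [_ max_n]]].
  by apply: (powers_in_unbounded (R := eq y)) => //; exists y.
by have := max_n n.+1 (roots_y n.+1); rewrite ltnn.
Qed.

Lemma infinite_height1 : infinite_height p e.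
Proof. by apply/infinite_heightP => n; exists e; rewrite expg1n. Qed.

Lemma infinite_heightV y : infinite_height p y -> infinite_height p y^-1.
Proof.
move=> /infinite_heightP yinf; apply/infinite_heightP => n.
by have [h ->] := yinf n; exists h^-1; apply: expVgn.
Qed.

Lemma infinite_heightJ y g : infinite_height p y -> infinite_height p (g^-1 • (y • g)).
Proof.
move=> /infinite_heightP yinf; apply/infinite_heightP => n.
by have [h ->] := yinf n; exists (g^-1 • (h • g)); apply: conjXg.
Qed.

Section NilpotentPGroup.
Variable c : nat.
Hypothesis nilG : forall x, upper_central c x.
Hypothesis pG : p_group G p.

Lemma expg_mul_infinite_height h n y : infinite_height p y ->
  exists w, h ^+ (p ^ n) • y = w ^+ (p ^ n).
Proof.
move=> /infinite_heightP yinf; have [a ha1] := pG h.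
have [k ->] := yinf (a * c + n); exists (h • k ^+ (p ^ (a * c))).
rewrite expnD expgM expgMn // expnM.
exact: commute_expg_class.
Qed.

Lemma infinite_heightM x y :
  infinite_height p x -> infinite_height p y -> infinite_height p (x • y).
Proof.
move=> /infinite_heightP xinf yinf; apply/infinite_heightP => n.
have [h ->] := xinf n; have [w ->] := expg_mul_infinite_height h n yinf.
by exists w.
Qed.

Lemma infinite_height_normal : is_normal_subgroup (infinite_height p (G:=G)).
Proof.
do !split; [exact: infinite_height1 | exact: infinite_heightM |
            exact: infinite_heightV | exact: infinite_heightJ].
Qed.

Lemma infinite_height_mod_infinite_height g :
  infinite_height_mod (infinite_height p (G:=G)) p g -> infinite_height p g.
Proof.
move=> ginf; apply/infinite_heightP => n.
have ex_root : exists x, infinite_height p (g^-1 • x).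
  by exists g; rewrite mulVg; apply: infinite_height1.
have [h /infinite_heightV] := powers_in_unbounded ex_root ginf n.
rewrite invMg invgK => zinf.
by have [w eq_w] := expg_mul_infinite_height h n zinf; exists w; rewrite -eq_w mulKVg.
Qed.

End NilpotentPGroup.
End Heights.
End GroupTheory.

Theorem mainTheorem5 (G : group) (p : nat) :
  prime p -> nilpotent G -> p_group G p ->
  is_normal_subgroup (infinite_height p (G:=G)) /\
  (forall g : G,
     infinite_height_mod (infinite_height p (G:=G)) p g ->
     infinite_height p g).
Proof.
move=> _ [c nilG] pG; split.
- exact: infinite_height_normal nilG pG.
- exact: infinite_height_mod_infinite_height nilG pG.
Qed.
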